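(* Let $\beta\in(3/2,\beta^*]$, let $\vec z\in S_\beta$ and let $\vec z=\sum_{i=1}^\infty a_i\beta^{-i}$ with $a_i\in\{\vec q_0,\vec q_1,\vec q_2\}$ be any representation of $\vec z$ in base $\beta$. Then there exists $\omega\in\Omega$ such that $a_i=d_i(\omega,\vec z)$ for all $i\ge1$.
   Context: $\beta^*\approx1.5437$ is the real root of $x^3-2x^2+2x=2$. $\vec q_0=(0,0)$, $\vec q_1=(1,0)$, $\vec q_2=(0,1)$, $f_i(\vec z)=(\vec z+\vec q_i)/\beta$, $S_\beta$ the attractor of this IFS. $H=\{(x,y):x<\frac1\beta,\ y<\frac1\beta,\ x+y>\frac{1}{\beta(\beta-1)}\}$; $\tilde E_0=([0,\frac1\beta)\times[0,\frac1\beta))\setminus H$; $\tilde E_1=\{0\le y<\frac1\beta,\ \frac{1}{\beta(\beta-1)}<x+y\le\frac1{\beta-1}\}\setminus H$; $\tilde E_2=\{0\le x<\frac1\beta,\ \frac{1}{\beta(\beta-1)}<x+y\le\frac1{\beta-1}\}\setminus H$; $\tilde C_{01}=\{x\ge\frac1\beta,\ y\ge0,\ x+y\le\frac{1}{\beta(\beta-1)}\}$; $\tilde C_{12}=\{x\ge\frac1\beta,\ y\ge\frac1\beta,\ x+y\le\frac1{\beta-1}\}$; $\tilde C_{02}=\{x\ge0,\ y\ge\frac1\beta,\ x+y\le\frac{1}{\beta(\beta-1)}\}$. For $\{i,j,k\}=\{0,1,2\}$, $E_i=\bigl(\tilde E_i\cup\bigcup_{n\ge1}f_jf_i^n(H)\cup\bigcup_{n\ge1}f_kf_i^n(H)\bigr)\setminus\bigcup_{n\ge0}f_i^n(H)$;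 for $ij\in\{01,12,02\}$, $C_{ij}=\tilde C_{ij}\setminus\bigl(\bigcup_{n\ge1}f_if_j^n(H)\cup\bigcup_{n\ge1}f_jf_i^n(H)\bigr)$. $\Omega=\{0,1\}^{\mathbb N}$ with left shift $\sigma$. $K_\beta:\Omega\times S_\beta\to\Omega\times S_\beta$: $K_\beta(\omega,\vec z)=(\omega,\beta\vec z-\vec q_i)$ if $\vec z\in E_i$; $(\sigma\omega,\beta\vec z-\vec q_i)$ if $\omega_1=0$, $\vec z\in C_{ij}$; $(\sigma\omega,\beta\vec z-\vec q_j)$ if $\omega_1=1$, $\vec z\in C_{ij}$. The digit $d_1(\omega,\vec z)$ is the vector subtracted, $d_n=d_1\circ K_\beta^{n-1}$. *)

From Stdlib Require Import Reals Lra ClassicalEpsilon.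
Open Scope R_scope.

Definition point := (R * R)%type.

Inductive digit := D0 | D1 | D2.

Definition q (d : digit) : point :=
  match d with D0 => (0, 0) | D1 => (1, 0) | D2 => (0, 1) end.

Definition f (beta : R) (i : digit) (z : point) : point :=
  ((fst z + fst (q i)) / beta, (snd z + snd (q i)) / beta).

(* a : nat -> digit, with a n standing for a_{n+1};
   z = sum_{i>=1} a_i beta^{-i}, componentwise convergent series. *)
Definition represents (beta : R) (a : nat -> digit) (z : point) : Prop :=
  infinite_sum (fun n => fst (q (a n)) / beta ^ (S n)) (fst z) /\
  infinite_sum (fun n => snd (q (a n)) / beta ^ (S n)) (snd z).

Definition S_beta (beta : R) (z : point) : Prop :=
  exists a, represents beta a z.

Definition H (beta : R) (z : point) : Prop :=
  fst z < 1 / beta /\ snd z < 1 / beta /\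
  fst z + snd z > 1 / (beta * (beta - 1)).

Definition Et (beta : R) (i : digit) (z : point) : Prop :=
  let x := fst z in let y := snd z in
  match i with
  | D0 => (0 <= x < 1 / beta /\ 0 <= y < 1 / beta) /\ ~ H beta z
  | D1 => (0 <= y < 1 / beta /\
           1 / (beta * (beta - 1)) < x + y <= 1 / (beta - 1)) /\ ~ H beta z
  | D2 => (0 <= x < 1 / beta /\
           1 / (beta * (beta - 1)) < x + y <= 1 / (beta - 1)) /\ ~ H beta z
  end.

Definition in_fj_fin_H (beta : R) (j i : digit) (n : nat) (z : point) : Prop :=
  exists h, H beta h /\ z = f beta j (Nat.iter n (f beta i) h).

Definition in_fin_H (beta : R) (i : digit) (n : nat) (z : point) : Prop :=
  exists h, H beta h /\ z = Nat.iter n (f beta i) h.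

Definition E (beta : R) (i : digit) (z : point) : Prop :=
  (Et beta i z \/
   exists j n, j <> i /\ (1 <= n)%nat /\ in_fj_fin_H beta j i n z) /\
  ~ (exists n, in_fin_H beta i n z).

Definition Ct (beta : R) (i j : digit) (z : point) : Prop :=
  let x := fst z in let y := snd z in
  match i, j with
  | D0, D1 => x >= 1 / beta /\ y >= 0 /\ x + y <= 1 / (beta * (beta - 1))
  | D1, D2 => x >= 1 / beta /\ y >= 1 / beta /\ x + y <= 1 / (beta - 1)
  | D0, D2 => x >= 0 /\ y >= 1 / beta /\ x + y <= 1 / (beta * (beta - 1))
  | _, _ => False
  end.

Definition C (beta : R) (i j : digit) (z : point) : Prop :=
  Ct beta i j z /\
  ~ (exists n, (1 <= n)%nat /\ (in_fj_fin_H beta i j n z \/ in_fj_fin_H beta j i n z)).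

(* Omega = {0,1}^N ; omega_1 is (omega 0); false = 0, true = 1 *)
Definition Omega := (nat -> bool).
Definition shift (w : Omega) : Omega := fun n => w (S n).

Definition dec (P : Prop) : bool :=
  if excluded_middle_informative P then true else false.

(* Digit chosen by K_beta at (omega, z), and whether omega is shifted.
   The pieces E_0,E_1,E_2,C_01,C_12,C_02 are tested in this order; the
   final default branch only matters outside their union. *)
Definition kchoice (beta : R) (w : Omega * point) : digit * bool :=
  let (om, z) := w in
  if dec (E beta D0 z) then (D0, false)
  else if dec (E beta D1 z) then (D1, false)
  else if dec (E beta D2 z) then (D2, false)
  else if dec (C beta D0 D1 z) then ((if om 0%nat then D1 else D0), true)
  else if dec (C beta D1 D2 z) then ((if om 0%nat then D2 else D1), true)
  else if dec (C beta D0 D2 z) then ((if om 0%nat then D2 else D0), true)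
  else (D0, false).

Definition K (beta : R) (w : Omega * point) : Omega * point :=
  let (d, s) := kchoice beta w in
  ((if s then shift (fst w) else fst w),
   (beta * fst (snd w) - fst (q d), beta * snd (snd w) - snd (q d))).

(* d n w stands for d_{n+1}(omega, z) = d_1 (K_beta^n (omega, z)) *)
Definition dseq (beta : R) (w : Omega * point) (n : nat) : digit :=
  fst (kchoice beta (Nat.iter n (K beta) w)).

(* Every point of S_beta lies in the triangle x, y >= 0, x + y <= 1/(beta-1).  For
   3/2 < beta < 2 the orbit f_i^n(H) stays in a cone that meets f_d(triangle) only when
   d = i, and H itself misses every f_d(triangle); peeling off digits by induction, no point
   of S_beta lies in any f_i^n(H).  Consequently, if z = f_d(w) with w in S_beta, then z in E_i
   forces i = d, while if z lies in no E_i it lies in a region C_ij with d in {i, j}, namely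
   the first such region K_beta tests.  So K_beta can follow any expansion (a_n) of z: along
   the orbit z_(n+1) = beta z_n - a_n it reads a bit of omega exactly when z_n lies in a
   region C_ij, and omega is built so that this bit selects a_n. *)

From Pilot Require Import Defs.
From Stdlib Require Import Reals Lra Lia FunctionalExtensionality ClassicalEpsilon.
Open Scope R_scope.

Lemma Un_cv_const (c : R) : Un_cv (fun _ => c) c.
Proof.
  intros eps Heps. exists 0%nat. intros n _.
  unfold Rdist. rewrite Rminus_diag, Rabs_R0. exact Heps.
Qed.

Lemma infinite_sum_ge0 (s : nat -> R) (l : R) :
  (forall n, 0 <= s n) -> infinite_sum s l -> 0 <= l.
Proof.
  intros Hs Hl. apply (@Rle_cv_lim (fun _ => 0) (sum_f_R0 s)); auto using Un_cv_const.
  intro N. apply cond_pos_sum, Hs.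
Qed.

Lemma infinite_sum_ext (s t : nat -> R) (l : R) :
  (forall n, s n = t n) -> infinite_sum s l -> infinite_sum t l.
Proof.
  intros Hst. apply Un_cv_ext. intro N. apply sum_eq. auto.
Qed.

Lemma infinite_sum_scal (s : nat -> R) (l c : R) :
  infinite_sum s l -> infinite_sum (fun n => c * s n) (c * l).
Proof.
  intros Hl. apply (Un_cv_ext (fun N => c * sum_f_R0 s N)).
  - intro N. rewrite scal_sum. apply sum_eq. intros. ring.
  - apply CV_mult; auto using Un_cv_const.
Qed.

Lemma infinite_sum_tail (s : nat -> R) (l : R) :
  infinite_sum s l -> infinite_sum (fun n => s (S n)) (l - s 0%nat).
Proof.
  intros Hl. apply (Un_cv_ext (fun N => sum_f_R0 s (N + 1) - s 0%nat)).
  - intro N. rewrite Nat.add_1_r, (decomp_sum s (S N)) by lia. simpl pred. ring.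
  - apply CV_minus; [apply CV_shift', Hl | apply Un_cv_const].
Qed.

Lemma sum_inv_pow_le (beta : R) (N : nat) :
  1 < beta -> sum_f_R0 (fun n => / beta ^ S n) N <= / (beta - 1).
Proof.
  intros Hb.
  assert (Hsum : sum_f_R0 (fun n => / beta ^ S n) N = (1 - / beta ^ S N) / (beta - 1)).
  { induction N as [|N IH].
    - simpl. field. lra.
    - rewrite tech5, IH. assert (0 < beta ^ N) by (apply pow_lt; lra).
      simpl. field. lra. }
  rewrite Hsum. assert (0 < / beta ^ S N) by (apply Rinv_0_lt_compat, pow_lt; lra).
  assert (0 < / (beta - 1)) by (apply Rinv_0_lt_compat; lra).
  unfold Rdiv. nra.
Qed.

Lemma infinite_sum_expand (c : nat -> R) (l beta : R) : beta <> 0 ->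
  infinite_sum (fun n => c n / beta ^ S n) l ->
  infinite_sum (fun n => c (S n) / beta ^ S n) (beta * l - c 0%nat).
Proof.
  intros Hb Hl.
  replace (beta * l - c 0%nat) with (beta * (l - c 0%nat / beta ^ 1)) by (simpl; field; auto).
  apply infinite_sum_tail, (infinite_sum_scal _ _ beta) in Hl.
  apply (infinite_sum_ext _ _ _) with (2 := Hl). intro n.
  assert (beta ^ n <> 0) by (apply pow_nonzero; auto).
  simpl. field. split; auto.
Qed.

Definition in_triangle (beta : R) (w : point) : Prop :=
  0 <= fst w /\ 0 <= snd w /\ fst w + snd w <= 1 / (beta - 1).

Definition expand (beta : R) (d : digit) (z : point) : point :=
  (beta * fst z - fst (q d), beta * snd z - snd (q d)).

Lemma f_expand (beta : R) (d : digit) (z : point) :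
  beta <> 0 -> Defs.f beta d (expand beta d z) = z.
Proof.
  intros Hb. destruct z as [x y]. unfold Defs.f, expand. simpl. f_equal; field; auto.
Qed.

Lemma represents_tail (beta : R) (a : nat -> digit) (z : point) : beta <> 0 ->
  represents beta a z -> represents beta (fun n => a (S n)) (expand beta (a 0%nat) z).
Proof.
  intros Hb [Hx Hy]. split.
  - exact (infinite_sum_expand (fun n => fst (q (a n))) _ _ Hb Hx).
  - exact (infinite_sum_expand (fun n => snd (q (a n))) _ _ Hb Hy).
Qed.

Lemma represents_in_triangle (beta : R) (a : nat -> digit) (z : point) :
  1 < beta -> represents beta a z -> in_triangle beta z.
Proof.
  intros Hb [Hx Hy].
  assert (Hterm : forall n, 0 <= fst (q (a n)) / beta ^ S n /\ 0 <= snd (q (a n)) / beta ^ S n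
    /\ fst (q (a n)) / beta ^ S n + snd (q (a n)) / beta ^ S n <= / beta ^ S n).
  { intro n. assert (0 < / beta ^ S n) by (apply Rinv_0_lt_compat, pow_lt; lra).
    unfold Rdiv. destruct (a n); cbn [q fst snd]; lra. }
  split; [|split].
  - apply (infinite_sum_ge0 _ _ (fun n => proj1 (Hterm n)) Hx).
  - apply (infinite_sum_ge0 _ _ (fun n => proj1 (proj2 (Hterm n))) Hy).
  - refine (Rle_cv_lim _ (CV_plus _ _ _ _ Hx Hy) (Un_cv_const (1 / (beta - 1)))).
    intro N. simpl. rewrite <- sum_plus. unfold Rdiv at 3. rewrite Rmult_1_l.
    eapply Rle_trans; [apply sum_Rle | apply (sum_inv_pow_le beta N Hb)].
    intros n _. apply Hterm.
Qed.

Lemma digit_eq_dec (x y : digit) : {x = y} + {x <> y}.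
Proof. decide equality. Qed.

Section Pieces.

Variable beta : R.
Hypothesis beta_range : 3/2 < beta < 2.

Lemma beta_constants :
  0 < /beta < 1 /\ /beta < /(beta*(beta-1)) < 2 * /beta /\
  /(beta-1) = /beta + /(beta*(beta-1)) /\
  /(beta*(beta-1)) * (1 - /beta) = /beta * /beta.
Proof.
  assert (0 < /beta) by (apply Rinv_0_lt_compat; lra).
  assert (/beta < 1) by (rewrite <- Rinv_1; apply Rinv_lt_contravar; lra).
  split; [lra|]. split; [split|split].
  - apply Rinv_lt_contravar; nra.
  - replace (2 * /beta) with (/(beta/2)) by (field; lra). apply Rinv_lt_contravar; nra.
  - field; lra.
  - field; lra.
Qed.

(* The regions below are polyhedral in 1/beta, 1/(beta(beta-1)) and 1/(beta-1);
   with these three as atoms, the relations of beta_constants suffice for nra. *)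
Ltac abstract_constants :=
  pose proof beta_constants;
  unfold Rdiv in *; rewrite ?Rmult_1_l in *;
  set (B := /beta) in *; set (C := /(beta*(beta-1))) in *; set (D := /(beta-1)) in *.

Lemma f_eq_shift i j u v : Defs.f beta i u = Defs.f beta j v ->
  fst u + fst (q i) = fst v + fst (q j) /\ snd u + snd (q i) = snd v + snd (q j).
Proof.
  unfold Defs.f. intros Huv. injection Huv as Hx Hy.
  assert (beta <> 0) by lra. unfold Rdiv in *.
  split; eapply Rmult_eq_reg_r; eauto; apply Rinv_neq_0_compat; auto.
Qed.

Lemma f_inj i u v : Defs.f beta i u = Defs.f beta i v -> u = v.
Proof.
  intros Huv. apply f_eq_shift in Huv. destruct u, v; simpl in *. f_equal; lra.
Qed.

Definition hole_cone (i : digit) (v : point) : Prop :=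
  match i with
  | D0 => fst v < 1/beta /\ snd v < 1/beta
  | D1 => snd v < 1/beta /\ fst v + snd v > 1/(beta*(beta-1))
  | D2 => fst v < 1/beta /\ fst v + snd v > 1/(beta*(beta-1))
  end.

Lemma H_hole_cone i h : H beta h -> hole_cone i h.
Proof. unfold H. destruct i; simpl; lra. Qed.

Lemma hole_cone_f i v : hole_cone i v -> hole_cone i (Defs.f beta i v).
Proof.
  destruct v as [x y]. unfold hole_cone, Defs.f.
  destruct i; simpl; abstract_constants; nra.
Qed.

Lemma hole_cone_iter i n h : H beta h -> hole_cone i (Nat.iter n (Defs.f beta i) h).
Proof.
  intros Hh. induction n; simpl; [apply H_hole_cone | apply hole_cone_f]; auto.
Qed.

Lemma H_f_triangle d w : in_triangle beta w -> ~ H beta (Defs.f beta d w).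
Proof.
  destruct w as [x y]. unfold H, in_triangle, Defs.f.
  destruct d; simpl; abstract_constants; nra.
Qed.

Lemma f_hole_cone_triangle_neq i d v w : hole_cone i v -> in_triangle beta w -> d <> i ->
  Defs.f beta i v <> Defs.f beta d w.
Proof.
  intros Hv Hw Hd Hvw. apply f_eq_shift in Hvw.
  destruct v as [x y], w as [x' y']. unfold hole_cone, in_triangle in *.
  destruct i, d; simpl in *; try congruence; abstract_constants; nra.
Qed.

Lemma ff_hole_cone_triangle_neq i j k u w : hole_cone i u -> in_triangle beta w ->
  j <> i -> k <> i -> j <> k ->
  Defs.f beta j (Defs.f beta i u) <> Defs.f beta k w.
Proof.
  intros Hu Hw Hj Hk Hjk Huw. apply f_eq_shift in Huw.
  destruct u as [x y], w as [x' y']. unfold hole_cone, in_triangle, Defs.f in *.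
  destruct i, j, k; simpl in *; try congruence; abstract_constants; nra.
Qed.

Lemma f_location d w : in_triangle beta w ->
  let z := Defs.f beta d w in
  Et beta d z \/
  (Ct beta D0 D1 z /\ (d = D0 \/ d = D1)) \/
  (Ct beta D1 D2 z /\ ~ Ct beta D0 D1 z /\ (d = D1 \/ d = D2)) \/
  (Ct beta D0 D2 z /\ ~ Ct beta D0 D1 z /\ ~ Ct beta D1 D2 z /\ (d = D0 \/ d = D2)).
Proof.
  destruct w as [x y]. unfold Et, Ct, H, in_triangle, Defs.f. simpl.
  intros Hw. abstract_constants.
  destruct d; simpl.
  - destruct (Rlt_or_le ((x+0)*B) B), (Rlt_or_le ((y+0)*B) B).
    + left. split; [split; split; nra | intro; nra].
    + right; right; right. repeat split; auto; try intro; nra.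
    + right; left. split; auto; nra.
    + right; left. split; auto; nra.
  - destruct (Rlt_or_le ((y+0)*B) B), (Rlt_or_le C ((x+1)*B + (y+0)*B)).
    + left. split; [split; split; nra | intro; nra].
    + right; left. split; auto; nra.
    + right; right; left. repeat split; auto; try intro; nra.
    + right; right; left. repeat split; auto; try intro; nra.
  - destruct (Rlt_or_le ((x+0)*B) B), (Rlt_or_le C ((x+0)*B + (y+1)*B)).
    + left. split; [split; split; nra | intro; nra].
    + right; right; right. repeat split; auto; try intro; nra.
    + right; right; left. repeat split; auto; try intro; nra.
    + right; right; left. repeat split; auto; try intro; nra.
Qed.

Lemma S_beta_in_triangle w : S_beta beta w -> in_triangle beta w.
Proof. intros [a Ha]. apply (represents_in_triangle beta a); [lra | exact Ha]. Qed.

Lemma S_beta_f_image u : S_beta beta u -> exists d w, S_beta beta w /\ u = Defs.f beta d w.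
Proof.
  intros [a Ha]. exists (a 0%nat), (expand beta (a 0%nat) u). split.
  - exists (fun n => a (S n)). apply represents_tail; [lra | exact Ha].
  - symmetry. apply f_expand. lra.
Qed.

Lemma S_beta_not_in_fin_H i n u : S_beta beta u -> ~ in_fin_H beta i n u.
Proof.
  revert u. induction n as [|n IH]; intros u Su [h [Hh Hu]];
    destruct (S_beta_f_image u Su) as [d [w [Sw Hw]]]; simpl in Hu; subst u.
  - rewrite Hw in Hh. exact (H_f_triangle d w (S_beta_in_triangle w Sw) Hh).
  - destruct (digit_eq_dec d i) as [-> | Hd].
    + apply f_inj in Hw. apply (IH w Sw). exists h. auto.
    + exact (f_hole_cone_triangle_neq i d _ w (hole_cone_iter i n h Hh)
               (S_beta_in_triangle w Sw) Hd Hw).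
Qed.

Lemma E_digit i j z w : S_beta beta w -> z = Defs.f beta j w -> E beta i z -> j = i.
Proof.
  intros Sw -> [[Het | [k [n [Hk [Hn [h [Hh Hkh]]]]]]] _];
    destruct (digit_eq_dec j i) as [| Hji]; auto; exfalso;
    pose proof (S_beta_in_triangle w Sw) as Tw.
  - unfold Et, in_triangle, Defs.f in *. destruct w as [x y].
    destruct i, j; simpl in *; try congruence; abstract_constants; nra.
  - destruct (digit_eq_dec k j) as [-> | Hkj].
    + apply f_inj in Hkh. apply (S_beta_not_in_fin_H i n w Sw). exists h. auto.
    + destruct n as [|n]; [lia|].
      exact (ff_hole_cone_triangle_neq i k j _ w (hole_cone_iter i n h Hh) Tw Hk Hji Hkj
               (eq_sym Hkh)).
Qed.

Lemma C_of_Ct i j d z w : S_beta beta z -> S_beta beta w -> z = Defs.f beta d w ->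
  (forall k, ~ E beta k z) -> i <> j -> Ct beta i j z -> Defs.C beta i j z.
Proof.
  intros Sz Sw Hz HnoE Hij Hct. split; [exact Hct|].
  assert (Hno : forall x y n, x <> y -> (1 <= n)%nat -> ~ in_fj_fin_H beta x y n z).
  { intros x y n Hxy Hn Hin. destruct (digit_eq_dec x d) as [-> | _].
    - destruct Hin as [h [Hh Hh']]. rewrite Hz in Hh'. apply f_inj in Hh'.
      apply (S_beta_not_in_fin_H y n w Sw). exists h. auto.
    - apply (HnoE y). split.
      + right. exists x, n. auto.
      + intros [m Hm]. exact (S_beta_not_in_fin_H y m z Sz Hm). }
  intros [n [Hn [Hin | Hin]]]; [exact (Hno i j n Hij Hn Hin) | exact (Hno j i n (not_eq_sym Hij) Hn Hin)].
Qed.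

Lemma C_location d z w : S_beta beta z -> S_beta beta w -> z = Defs.f beta d w ->
  (forall k, ~ E beta k z) ->
  (Defs.C beta D0 D1 z /\ (d = D0 \/ d = D1)) \/
  (Defs.C beta D1 D2 z /\ ~ Defs.C beta D0 D1 z /\ (d = D1 \/ d = D2)) \/
  (Defs.C beta D0 D2 z /\ ~ Defs.C beta D0 D1 z /\ ~ Defs.C beta D1 D2 z /\ (d = D0 \/ d = D2)).
Proof.
  intros Sz Sw Hz HnoE.
  assert (HC : forall i j, i <> j -> Ct beta i j z -> Defs.C beta i j z)
    by (intros; eapply C_of_Ct; eauto).
  assert (HnC : forall i j, ~ Ct beta i j z -> ~ Defs.C beta i j z) by (intros i j ? []; auto).
  destruct (f_location d w (S_beta_in_triangle w Sw)) as [Het | [[? ?] | [[? [? ?]] | [? [? [? ?]]]]]];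
    rewrite <- Hz in *.
  - exfalso. apply (HnoE d). split; [left; exact Het|].
    intros [n Hn]. exact (S_beta_not_in_fin_H d n z Sz Hn).
  - left. split; [apply HC|]; auto; discriminate.
  - right; left. split; [apply HC|]; auto; discriminate.
  - right; right. split; [apply HC|]; auto; discriminate.
Qed.

Lemma dec_true (P : Prop) : P -> dec P = true.
Proof. unfold dec. destruct (excluded_middle_informative P); tauto. Qed.

Lemma dec_false (P : Prop) : ~ P -> dec P = false.
Proof. unfold dec. destruct (excluded_middle_informative P); tauto. Qed.

Definition reads_bit (z : point) : bool := snd (kchoice beta ((fun _ => false), z)).

Definition bit_for (d : digit) (z : point) : bool :=
  match d with D0 => false | D1 => dec (Defs.C beta D0 D1 z) | D2 => true end.

Lemma kchoice_follows d z w (om : Omega) :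
  S_beta beta z -> S_beta beta w -> z = Defs.f beta d w ->
  (reads_bit z = true -> om 0%nat = bit_for d z) ->
  kchoice beta (om, z) = (d, reads_bit z).
Proof.
  intros Sz Sw Hz. unfold reads_bit.
  destruct (excluded_middle_informative (exists k, E beta k z)) as [[k Hk] | HnoE].
  - rewrite <- (E_digit k d z w Sw Hz Hk) in Hk.
    assert (HnE : forall k, k <> d -> dec (E beta k z) = false).
    { intros k' Hk'. apply dec_false. intro HE. apply Hk'. symmetry. eapply E_digit; eauto. }
    intros _. unfold kchoice.
    destruct d; rewrite ?(HnE D0), ?(HnE D1), (dec_true _ Hk) by discriminate; reflexivity.
  - assert (HnE : forall k, dec (E beta k z) = false)
      by (intro k; apply dec_false; intro; apply HnoE; exists k; auto).
    assert (HnoE' : forall k, ~ E beta k z) by (intros k ?; apply HnoE; exists k; auto).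
    unfold kchoice, bit_for. rewrite !HnE.
    destruct (C_location d z w Sz Sw Hz HnoE')
      as [[HC Hd] | [[HC [HnC Hd]] | [HC [HnC1 [HnC2 Hd]]]]];
      rewrite ?(dec_true _ HC), ?(dec_false _ HnC), ?(dec_false _ HnC1), ?(dec_false _ HnC2);
      intro Hbit; rewrite (Hbit eq_refl); destruct Hd as [-> | ->]; reflexivity.
Qed.

End Pieces.

Section Orbit.

Variables (beta : R) (a : nat -> digit) (z : point).
Hypothesis beta_range : 3/2 < beta < 2.
Hypothesis a_represents : represents beta a z.

Fixpoint orbit (n : nat) : point :=
  match n with O => z | S m => expand beta (a m) (orbit m) end.

Lemma represents_orbit n : represents beta (fun k => a (n + k)%nat) (orbit n).
Proof.
  induction n as [|n IH]; [exact a_represents|].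
  apply (represents_tail beta) in IH; [|lra]. simpl.
  rewrite Nat.add_0_r in IH.
  replace (fun k => a (S (n + k))) with (fun k => a (n + S k)%nat); [exact IH|].
  apply functional_extensionality. intro k. f_equal. lia.
Qed.

Lemma S_beta_orbit n : S_beta beta (orbit n).
Proof. eexists. apply represents_orbit. Qed.

Lemma orbit_f n : orbit n = Defs.f beta (a n) (orbit (S n)).
Proof. simpl. symmetry. apply f_expand. lra. Qed.

Fixpoint bits_read (n : nat) : nat :=
  match n with
  | O => O
  | S m => (bits_read m + if reads_bit beta (orbit m) then 1 else 0)%nat
  end.

Lemma bits_read_mono m n : (m <= n)%nat -> (bits_read m <= bits_read n)%nat.
Proof. induction 1; simpl; lia. Qed.

Lemma bits_read_lt m n : (m < n)%nat -> reads_bit beta (orbit m) = true ->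
  (bits_read m < bits_read n)%nat.
Proof.
  intros Hmn Hm. apply (Nat.lt_le_trans _ (bits_read (S m))); [simpl; rewrite Hm; lia|].
  apply bits_read_mono. exact Hmn.
Qed.

(* The step n read as bit k is unique because bits_read increases strictly at reading
   steps (bits_read_lt). *)
Definition omega_for : Omega := fun k =>
  match excluded_middle_informative
          (exists n, reads_bit beta (orbit n) = true /\ bits_read n = k) with
  | left Hk => let n := proj1_sig (constructive_indefinite_description _ Hk) in
               bit_for beta (a n) (orbit n)
  | right _ => false
  end.

Lemma omega_for_bits_read n : reads_bit beta (orbit n) = true ->
  omega_for (bits_read n) = bit_for beta (a n) (orbit n).
Proof.
  intros Hn. unfold omega_for.
  destruct (excluded_middle_informative _) as [Hk | Hk].
  - destruct (constructive_indefinite_description _ Hk) as [m [Hm Hmn]]. simpl.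
    assert (m = n) as ->; [|reflexivity].
    destruct (Nat.lt_total m n) as [Hlt | [Heq | Hlt]]; auto.
    + pose proof (bits_read_lt m n Hlt Hm). lia.
    + pose proof (bits_read_lt n m Hlt Hn). lia.
  - exfalso. apply Hk. exists n. auto.
Qed.

Lemma kchoice_orbit n :
  kchoice beta ((fun k => omega_for (bits_read n + k)%nat), orbit n) =
  (a n, reads_bit beta (orbit n)).
Proof.
  apply (kchoice_follows beta beta_range (a n) (orbit n) (orbit (S n)));
    auto using S_beta_orbit, orbit_f.
  intro Hn. rewrite Nat.add_0_r. apply omega_for_bits_read, Hn.
Qed.

Lemma K_iter_orbit n :
  Nat.iter n (K beta) (omega_for, z) = ((fun k => omega_for (bits_read n + k)%nat), orbit n).
Proof.
  induction n as [|n IH]; [reflexivity|].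
  simpl Nat.iter. rewrite IH. unfold K. rewrite kchoice_orbit. simpl.
  f_equal. destruct (reads_bit beta (orbit n)); simpl;
    apply functional_extensionality; intro k; unfold shift; f_equal; lia.
Qed.

Lemma dseq_omega_for n : dseq beta (omega_for, z) n = a n.
Proof. unfold dseq. rewrite K_iter_orbit, kchoice_orbit. reflexivity. Qed.

End Orbit.

Lemma lt_2_of_cubic (b : R) : b ^ 3 - 2 * b ^ 2 + 2 * b = 2 -> b < 2.
Proof. intros Hb. nra. Qed.

Theorem theorem6p6 (beta beta_star : R)
  (Hstar : beta_star ^ 3 - 2 * beta_star ^ 2 + 2 * beta_star = 2)
  (Hlo : 3 / 2 < beta) (Hhi : beta <= beta_star)
  (z : point) (Hz : S_beta beta z)
  (a : nat -> digit) (Ha : represents beta a z) :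
  exists omega : Omega, forall n : nat, a n = dseq beta (omega, z) n.
Proof.
  assert (beta_range : 3/2 < beta < 2) by (pose proof (lt_2_of_cubic _ Hstar); lra).
  exists (omega_for beta a z). intro n. symmetry. exact (dseq_omega_for beta a z beta_range Ha n).
Qed.
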